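(* Let $(A^{\mathbb N},\mathbb B_\Pi(A^{\mathbb N}),m,\sigma)$ be a Markov shift over $A=\{0,1,\dots,l\}$, let $\mathcal P=\{P_0,\dots,P_n\}\subset\mathbb B_\Pi(A^{\mathbb N})$ be a partition of $A^{\mathbb N}$, and let $O\in\mathbb B_\Pi(A^{\mathbb N})$ satisfy $m(O)=0$ and $\sigma^{-1}(O)=O$. Put $\widetilde{\mathcal P}=\{P\setminus O\mid P\in\mathcal P\}\cup\{O\}$. If $\widetilde{\mathcal P}$ satisfies: (i) each element of $\widetilde{\mathcal P}$ is either a subset of some cylinder $C_a$, $a\in A$, or is a $\sigma$-invariant set ($\sigma^{-1}(Q)=Q$) of measure $0$; and (ii) for any $Q_1,Q_2\in\widetilde{\mathcal P}$, either $Q_1\cap\sigma^{-1}(Q_2)=C_a\cap\sigma^{-1}(Q_2)$ for some $a\in A$, or $m(Q_1\cap\sigma^{-1}(Q_2))=0$; then $\mathcal P$ is generating and has the Markov property.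
   Context: Markov shift over $A=\{0,\dots,l\}$: given an $(l+1)\times(l+1)$ stochastic matrix $Q=(q_{ij})$ and a stationary probability vector $p$ of $Q$ with all $p_a>0$, it is $(A^{\mathbb N},\mathbb B_\Pi(A^{\mathbb N}),m,\sigma)$ with $A^{\mathbb N}$ the one-sided sequences $s=(s_0,s_1,\dots)$, $\mathbb B_\Pi$ generated by cylinders $C_{a_0\dots a_{n-1}}=\{s: s_i=a_i, i<n\}$, $(\sigma s)_j=s_{j+1}$, and $m(C_{a_0\dots a_{n-1}})=p_{a_0}q_{a_0a_1}\cdots q_{a_{n-2}a_{n-1}}$. A finite measurable partition $\mathcal G=\{G_0,\dots,G_r\}$ is generating if for every measurable $B$ there is $A'$ in the $\sigma$-algebra generated by the sets $\sigma^{-k}(G_i)$, $k\in\mathbb N_0$, with $m(A'\triangle B)=0$. A finite partition $\mathcal M=\{M_0,\dots,M_r\}$ has the Markov property if for all $n\in\mathbb N$ and $i_0,\dots,i_n$ with $m(M_{i_0}\cap\sigma^{-1}M_{i_1}\cap\dots\cap\sigma^{-(n-1)}M_{i_{n-1}})>0$, $\frac{m(M_{i_0}\cap\sigma^{-1}M_{i_1}\cap\dots\cap\sigma^{-n}M_{i_n})}{m(M_{i_0}\cap\dots\cap\sigma^{-(n-1)}M_{i_{n-1}})}=\frac{m(M_{i_{n-1}}\cap\sigma^{-1}M_{i_n})}{m(M_{i_{n-1}})}$. *)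

From Stdlib Require Import Reals List Arith.
Import ListNotations.
Open Scope R_scope.

Definition Alph (l : nat) := {a : nat | (a <= l)%nat}.
Definition Seq (l : nat) := nat -> Alph l.
Definition letter {l : nat} (s : Seq l) (i : nat) : nat := proj1_sig (s i).

Definition shift {l : nat} (s : Seq l) : Seq l := fun j => s (S j).
Definition shiftn {l : nat} (k : nat) (s : Seq l) : Seq l := fun j => s (k + j)%nat.

Definition set (X : Type) := X -> Prop.
Definition preim {l : nat} (k : nat) (B : set (Seq l)) : set (Seq l) :=
  fun s => B (shiftn k s).

Inductive sigma_gen {X : Type} (G : set X -> Prop) : set X -> Prop :=
| sg_gen : forall B, G B -> sigma_gen G B
| sg_full : sigma_gen G (fun _ => True)
| sg_compl : forall B, sigma_gen G B -> sigma_gen G (fun x => ~ B x)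
| sg_union : forall F : nat -> set X, (forall k, sigma_gen G (F k)) ->
    sigma_gen G (fun x => exists k, F k x).

Definition cyl {l : nat} (w : list nat) : set (Seq l) :=
  fun s => forall i, (i < length w)%nat -> letter s i = nth i w 0%nat.

Definition is_cylinder {l : nat} (B : set (Seq l)) : Prop :=
  exists w : list nat, B = cyl w.

Definition measurable {l : nat} : set (Seq l) -> Prop := sigma_gen (@is_cylinder l).

(* weight p_{a0} q_{a0 a1} ... q_{a_{n-2} a_{n-1}} of a nonempty word *)
Fixpoint qprod (q : nat -> nat -> R) (a : nat) (w : list nat) : R :=
  match w with
  | [] => 1
  | b :: w' => q a b * qprod q b w'
  end.

Definition cyl_weight (p : nat -> R) (q : nat -> nat -> R) (a : nat) (w : list nat) : R :=
  p a * qprod q a w.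

Definition stochastic (l : nat) (q : nat -> nat -> R) : Prop :=
  (forall i j, (i <= l)%nat -> (j <= l)%nat -> 0 <= q i j) /\
  (forall i, (i <= l)%nat -> sum_f_R0 (fun j => q i j) l = 1).

Definition stationary_pos (l : nat) (q : nat -> nat -> R) (p : nat -> R) : Prop :=
  (forall a, (a <= l)%nat -> 0 < p a) /\
  sum_f_R0 p l = 1 /\
  (forall j, (j <= l)%nat -> sum_f_R0 (fun i => p i * q i j) l = p j).

(* m is a (countably additive, nonnegative) measure on B_Pi(A^N) which on
   cylinders is given by the Markov formula.  By the pi-lambda theorem this
   determines m uniquely on B_Pi(A^N). *)
Definition markov_measure (l : nat) (q : nat -> nat -> R) (p : nat -> R)
    (m : set (Seq l) -> R) : Prop :=
  (forall B, measurable B -> 0 <= m B) /\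
  (forall F : nat -> set (Seq l), (forall k, measurable (F k)) ->
     (forall i j, i <> j -> forall s, F i s -> F j s -> False) ->
     infinite_sum (fun k => m (F k)) (m (fun s => exists k, F k s))) /\
  (forall (a : nat) (w : list nat), Forall (fun b => (b <= l)%nat) (a :: w) ->
     m (cyl (a :: w)) = cyl_weight p q a w).

Definition is_partition {l : nat} (N : nat) (P : nat -> set (Seq l)) : Prop :=
  (forall i, (i <= N)%nat -> measurable (P i)) /\
  (forall i j, (i <= N)%nat -> (j <= N)%nat -> i <> j ->
     forall s, P i s -> P j s -> False) /\
  (forall s, exists i, (i <= N)%nat /\ P i s).

Definition generating {l : nat} (m : set (Seq l) -> R) (N : nat)
    (P : nat -> set (Seq l)) : Prop :=
  forall B, measurable B ->
    exists A', sigma_gen (fun C => exists k i, (i <= N)%nat /\ C = preim k (P i)) A' /\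
      m (fun s => ~ (A' s <-> B s)) = 0.

Definition pcyl {l : nat} (M : nat -> set (Seq l)) (idx : nat -> nat) (n : nat) : set (Seq l) :=
  fun s => forall j, (j < n)%nat -> M (idx j) (shiftn j s).

Definition markov_property {l : nat} (m : set (Seq l) -> R) (N : nat)
    (M : nat -> set (Seq l)) : Prop :=
  forall (n : nat) (idx : nat -> nat), (1 <= n)%nat ->
    (forall j, (j <= n)%nat -> (idx j <= N)%nat) ->
    0 < m (pcyl M idx n) ->
    m (pcyl M idx (S n)) / m (pcyl M idx n) =
    m (fun s => M (idx (n - 1)%nat) s /\ M (idx n) (shift s)) / m (M (idx (n - 1)%nat)).

Definition invariant {l : nat} (B : set (Seq l)) : Prop :=
  forall s, B (shift s) <-> B s.

(* the modified partition P~ indexed by 0..N+1: P_i \ O for i <= N, and O at N+1 *)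
Definition Ptilde {l : nat} (N : nat) (P : nat -> set (Seq l)) (O : set (Seq l)) :
    nat -> set (Seq l) :=
  fun k s => if Nat.leb k N then P k s /\ ~ O s else O s.

(* Let Z be the union of the blocks of P~ that are null and invariant (O is one of them);
   Z is a null invariant set.  Off Z every block of P~ lies in a single 1-cylinder C_a, so C_a agrees
   modulo Z with a finite union of blocks of P, and every cylinder C_{a_0...a_k} agrees modulo
   Z with an intersection of the shifted blocks sigma^{-j}(P_i).  The measurable sets that are
   a.e. equal to a set generated by the sigma^{-j}(P_i) form a sigma-algebra, hence contain
   everything: P is generating.

   For the Markov property, in a word M_{i_0} /\ ... /\ sigma^{-n} M_{i_n} of blocks of P~ of
   positive measure each block lies in a cylinder C_{a_j}, and condition (ii) recovers the
   whole word from its letters a_0 ... a_n and its last block: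
   the word equals C_{a_0...a_n} /\ sigma^{-n} M_{i_n}.  The Markov property of m itself,
     m(C_{w b} /\ sigma^{-|w|} B) p_b = m(C_b /\ B) m(C_{w b}),
   which holds on cylinders by the product formula and extends to all measurable B by
   uniqueness of measures, then yields the ratio identity.  Removing the null invariant set O
   from the blocks of P changes none of the measures involved. *)

From Stdlib Require Import Reals List Arith Lia Lra.
From Stdlib Require Import Classical FunctionalExtensionality PropExtensionality ClassicalEpsilon.
Import ListNotations.
Open Scope R_scope.

(** * Sigma-algebras and Dynkin systems *)

Lemma set_ext {X : Type} (A B : set X) : (forall x, A x <-> B x) -> A = B.
Proof.
  intros H. apply functional_extensionality; intros x.
  apply propositional_extensionality; auto.
Qed.

Definition disjoint_family {X : Type} (F : nat -> set X) : Prop :=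
  forall i j, i <> j -> forall x, F i x -> F j x -> False.

Definition symdiff {X : Type} (A B : set X) : set X := fun x => ~ (A x <-> B x).

Definition pi_system {X : Type} (G : set X -> Prop) : Prop :=
  forall A B, G A -> G B -> G (fun x => A x /\ B x).

Section SigmaAlgebra.

Context {X : Type}.
Variable G : set X -> Prop.

Lemma sigma_gen_ext (A B : set X) :
  sigma_gen G A -> (forall x, A x <-> B x) -> sigma_gen G B.
Proof. intros HA E. rewrite <- (set_ext _ _ E). exact HA. Qed.

Lemma sigma_gen_empty : sigma_gen G (fun _ => False).
Proof.
  apply sigma_gen_ext with (fun x => ~ (fun _ : X => True) x).
  - apply sg_compl, sg_full.
  - tauto.
Qed.

Lemma sigma_gen_union2 (A B : set X) :
  sigma_gen G A -> sigma_gen G B -> sigma_gen G (fun x => A x \/ B x).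
Proof.
  intros HA HB.
  apply sigma_gen_ext with
    (fun x => exists k, (fun k => match k with 0%nat => A | _ => B end) k x).
  - apply sg_union. intros [|k]; assumption.
  - intros x; split.
    + intros [[|k] H]; auto.
    + intros [H|H]; [exists 0%nat | exists 1%nat]; exact H.
Qed.

Lemma sigma_gen_inter (A B : set X) :
  sigma_gen G A -> sigma_gen G B -> sigma_gen G (fun x => A x /\ B x).
Proof.
  intros HA HB.
  apply sigma_gen_ext with (fun x => ~ (fun y => ~ A y \/ ~ B y) x).
  - apply sg_compl, sigma_gen_union2; apply sg_compl; assumption.
  - intros x; simpl; tauto.
Qed.

Lemma sigma_gen_symdiff (A B : set X) :
  sigma_gen G A -> sigma_gen G B -> sigma_gen G (symdiff A B).
Proof.
  intros HA HB.
  apply sigma_gen_ext with (fun x => (A x /\ ~ B x) \/ (~ A x /\ B x)).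
  - apply sigma_gen_union2; apply sigma_gen_inter; auto; apply sg_compl; auto.
  - intros x; unfold symdiff; tauto.
Qed.

Lemma sigma_gen_union_if (c : nat -> Prop) (F : nat -> set X) :
  (forall k, c k -> sigma_gen G (F k)) -> sigma_gen G (fun x => exists k, c k /\ F k x).
Proof.
  intros HF. apply (sg_union G (fun k x => c k /\ F k x)). intros k.
  destruct (classic (c k)) as [Hc|Hc].
  - apply sigma_gen_ext with (F k); auto. tauto.
  - apply sigma_gen_ext with (fun _ => False); [apply sigma_gen_empty | tauto].
Qed.

End SigmaAlgebra.

Section Disjointification.

Context {X : Type}.
Variable F : nat -> set X.

Definition disjointed (k : nat) : set X :=
  fun x => F k x /\ forall j, (j < k)%nat -> ~ F j x.

Lemma union_disjointed :
  (fun x => exists k, F k x) = (fun x => exists k, disjointed k x).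
Proof.
  apply set_ext; intros x; split.
  - intros [k Hk]. induction k as [k IH] using lt_wf_ind.
    destruct (classic (exists j, (j < k)%nat /\ F j x)) as [[j [Hj HFj]]|Hnone].
    + exact (IH j Hj HFj).
    + exists k. split; [exact Hk|]. intros j Hj HFj. apply Hnone. eauto.
  - intros [k [Hk _]]. eauto.
Qed.

Lemma disjointed_disjoint : disjoint_family disjointed.
Proof.
  intros i j Hij x [Hi Hi'] [Hj Hj'].
  destruct (Nat.lt_gt_cases i j) as [[H|H] _]; auto.
  - exact (Hj' i H Hi).
  - exact (Hi' j H Hj).
Qed.

Lemma disjointed_closed (D : set X -> Prop) :
  D (fun _ => True) -> (forall A, D A -> D (fun x => ~ A x)) ->
  (forall A B, D A -> D B -> D (fun x => A x /\ B x)) ->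
  (forall k, D (F k)) -> forall k, D (disjointed k).
Proof.
  intros Dfull Dcompl Dinter DF k.
  assert (Hprefix : D (fun x => forall j, (j < k)%nat -> ~ F j x)).
  { induction k as [|k IH].
    - replace (fun x => forall j, (j < 0)%nat -> ~ F j x) with (fun _ : X => True);
        [exact Dfull|].
      apply set_ext; intros x; split; [intros _ j Hj; lia | auto].
    - replace (fun x => forall j, (j < S k)%nat -> ~ F j x)
        with (fun x => (fun x => forall j, (j < k)%nat -> ~ F j x) x /\ ~ F k x).
      + apply Dinter; auto.
      + apply set_ext; intros x; split.
        * intros [H1 H2] j Hj. destruct (Nat.eq_dec j k) as [->|]; auto. apply H1; lia.
        * intros H; split; auto. }
  apply Dinter; auto.
Qed.

End Disjointification.

Inductive dynkin {X : Type} (G : set X -> Prop) : set X -> Prop :=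
| dy_gen : forall A, G A -> dynkin G A
| dy_full : dynkin G (fun _ => True)
| dy_compl : forall A, dynkin G A -> dynkin G (fun x => ~ A x)
| dy_union : forall F : nat -> set X, (forall k, dynkin G (F k)) -> disjoint_family F ->
    dynkin G (fun x => exists k, F k x).

Section Dynkin.

Context {X : Type}.
Variable G : set X -> Prop.

Lemma dynkin_ext (A B : set X) : dynkin G A -> (forall x, A x <-> B x) -> dynkin G B.
Proof. intros HA E. rewrite <- (set_ext _ _ E). exact HA. Qed.

Lemma dynkin_union2 (A B : set X) :
  dynkin G A -> dynkin G B -> (forall x, A x -> B x -> False) ->
  dynkin G (fun x => A x \/ B x).
Proof.
  intros HA HB HAB.
  apply dynkin_ext with (fun x => exists k,
     (fun k => match k with 0%nat => A | 1%nat => B | _ => fun _ => False end) k x).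
  - apply dy_union.
    + intros [|[|k]]; auto.
      apply dynkin_ext with (fun x => ~ (fun _ : X => True) x); [apply dy_compl, dy_full | tauto].
    + intros [|[|i]] [|[|j]] Hij x; simpl; try tauto; try lia; eauto.
  - intros x; split.
    + intros [[|[|k]] H]; auto. destruct H.
    + intros [H|H]; [exists 0%nat | exists 1%nat]; exact H.
Qed.

Lemma dynkin_inter_r (B : set X) :
  dynkin G B -> (forall A, G A -> dynkin G (fun x => A x /\ B x)) ->
  forall C, dynkin G C -> dynkin G (fun x => C x /\ B x).
Proof.
  intros HB HGB C HC. induction HC as [A HA| |A HA IH|F HF IH HFd].
  - auto.
  - apply dynkin_ext with B; [exact HB | tauto].
  - apply dynkin_ext with (fun x => ~ (fun y => ~ B y \/ (A y /\ B y)) x).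
    + apply dy_compl, dynkin_union2; [apply dy_compl; exact HB | exact IH | tauto].
    + intros x; simpl; tauto.
  - apply dynkin_ext with (fun x => exists k, (fun k x => F k x /\ B x) k x).
    + apply dy_union; auto. intros i j Hij x [Hi _] [Hj _]. exact (HFd i j Hij x Hi Hj).
    + intros x; split; [intros [k [Hk Hb]]; eauto | intros [[k Hk] Hb]; eauto].
Qed.

Hypothesis HG : pi_system G.

Lemma dynkin_inter (A B : set X) :
  dynkin G A -> dynkin G B -> dynkin G (fun x => A x /\ B x).
Proof.
  intros HA HB.
  assert (Hgen : forall B0, G B0 -> forall C, dynkin G C -> dynkin G (fun x => C x /\ B0 x)).
  { intros B0 HB0. apply dynkin_inter_r; [apply dy_gen; exact HB0|].
    intros A0 HA0. apply dy_gen, HG; assumption. }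
  apply dynkin_inter_r; auto. intros A0 HA0.
  apply dynkin_ext with (fun x => B x /\ A0 x); [apply Hgen; auto | tauto].
Qed.

Lemma sigma_gen_dynkin (A : set X) : sigma_gen G A -> dynkin G A.
Proof.
  intros HA. induction HA as [A HA| |A HA IH|F HF IH].
  - apply dy_gen; exact HA.
  - apply dy_full.
  - apply dy_compl; exact IH.
  - rewrite union_disjointed. apply dy_union; [|apply disjointed_disjoint].
    apply disjointed_closed; auto.
    + apply dy_full.
    + apply dy_compl.
    + apply dynkin_inter.
Qed.

Theorem pi_lambda (D : set X -> Prop) :
  (forall A, G A -> D A) -> D (fun _ => True) ->
  (forall A, D A -> D (fun x => ~ A x)) ->
  (forall F : nat -> set X, (forall k, D (F k)) -> disjoint_family F ->
     D (fun x => exists k, F k x)) ->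
  forall A, sigma_gen G A -> D A.
Proof.
  intros DG Dfull Dcompl Dunion A HA.
  apply sigma_gen_dynkin in HA.
  induction HA as [A HA| |A _ IH|F _ IH HF]; auto.
Qed.

End Dynkin.

(** * Measures *)

Lemma infinite_sum_eventually (f : nat -> R) (L : R) (n0 : nat) :
  (forall n, (n >= n0)%nat -> sum_f_R0 f n = L) -> infinite_sum f L.
Proof.
  intros H eps Heps. exists n0. intros n Hn. rewrite H by exact Hn.
  unfold Rdist. rewrite Rminus_diag, Rabs_R0. lra.
Qed.

Lemma infinite_sum_scal (f : nat -> R) (L c : R) :
  infinite_sum f L -> infinite_sum (fun k => f k * c) (L * c).
Proof.
  intros Hf.
  assert (Hc : Un_cv (fun _ => c) c).
  { intros eps Heps. exists 0%nat. intros n _. unfold Rdist.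
    rewrite Rminus_diag, Rabs_R0. lra. }
  intros eps Heps. destruct (CV_mult _ _ _ _ Hf Hc eps Heps) as [n0 Hn0].
  exists n0. intros n Hn. rewrite <- scal_sum, Rmult_comm. exact (Hn0 n Hn).
Qed.

Definition is_measure {X : Type} (G : set X -> Prop) (mu : set X -> R) : Prop :=
  (forall B, sigma_gen G B -> 0 <= mu B) /\
  (forall F : nat -> set X, (forall k, sigma_gen G (F k)) -> disjoint_family F ->
     infinite_sum (fun k => mu (F k)) (mu (fun x => exists k, F k x))).

Section Measure.

Context {X : Type}.
Variables (G : set X -> Prop) (mu : set X -> R).
Hypothesis Hmu : is_measure G mu.

Lemma measure_ge0 (B : set X) : sigma_gen G B -> 0 <= mu B.
Proof. apply (proj1 Hmu). Qed.

Lemma measure_empty : mu (fun _ => False) = 0.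
Proof.
  set (c := mu (fun _ : X => False)).
  assert (Hsum : infinite_sum (fun _ => c) c).
  { pose proof (proj2 Hmu (fun _ _ => False)) as Hsum.
    cbv beta in Hsum.
    replace (fun _ : X => exists _ : nat, False) with (fun _ : X => False) in Hsum
      by (apply set_ext; intros x; firstorder).
    apply Hsum; [intros; apply sigma_gen_empty | intros i j _ x []]. }
  assert (Hc : 0 <= c) by (apply measure_ge0, sigma_gen_empty).
  (* a series of constant terms c with sum c has partial sums (n+1) c, so c = 0 *)
  destruct (Rle_lt_or_eq_dec 0 c Hc) as [Hpos|]; [exfalso|auto].
  destruct (Hsum c Hpos) as [n0 Hn0]. specialize (Hn0 (S n0) (le_S _ _ (le_n _))).
  rewrite sum_cte in Hn0. unfold Rdist in Hn0. rewrite !S_INR in Hn0.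
  pose proof (pos_INR n0). rewrite Rabs_right in Hn0; nra.
Qed.

Lemma measure_eq0_of_empty (A : set X) : (forall x, ~ A x) -> mu A = 0.
Proof.
  intros HA. replace A with (fun _ : X => False) by (apply set_ext; firstorder).
  exact measure_empty.
Qed.

Lemma measure_union2 (A B : set X) :
  sigma_gen G A -> sigma_gen G B -> (forall x, A x -> B x -> False) ->
  mu (fun x => A x \/ B x) = mu A + mu B.
Proof.
  intros HA HB HAB.
  set (F := fun k => match k with 0%nat => A | 1%nat => B | _ => fun _ : X => False end).
  replace (fun x => A x \/ B x) with (fun x => exists k, F k x).
  - symmetry. apply (uniqueness_sum (fun k => mu (F k))).
    + apply infinite_sum_eventually with 1%nat. intros n Hn.
      induction n as [|[|n] IH]; [lia | simpl; ring |].
      simpl in *. rewrite IH by lia. unfold F. rewrite measure_empty. ring.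
    + apply (proj2 Hmu).
      * intros [|[|k]]; auto. apply sigma_gen_empty.
      * intros [|[|i]] [|[|j]] Hij x; simpl; try tauto; try lia; eauto.
  - apply set_ext; intros x; split.
    + intros [[|[|k]] H]; auto. destruct H.
    + intros [H|H]; [exists 0%nat | exists 1%nat]; exact H.
Qed.

Lemma measure_split (A B : set X) :
  sigma_gen G A -> sigma_gen G B ->
  mu A = mu (fun x => A x /\ B x) + mu (fun x => A x /\ ~ B x).
Proof.
  intros HA HB. rewrite <- measure_union2.
  - f_equal. apply set_ext; intros x; tauto.
  - apply sigma_gen_inter; auto.
  - apply sigma_gen_inter; auto. apply sg_compl; auto.
  - tauto.
Qed.

Lemma measure_le (A B : set X) :
  sigma_gen G A -> sigma_gen G B -> (forall x, A x -> B x) -> mu A <= mu B.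
Proof.
  intros HA HB HAB. rewrite (measure_split B A HB HA).
  replace (fun x => B x /\ A x) with A by (apply set_ext; intros x; firstorder).
  assert (0 <= mu (fun x => B x /\ ~ A x)).
  { apply measure_ge0, sigma_gen_inter; auto. apply sg_compl; auto. }
  lra.
Qed.

Lemma measure_null_sub (A B : set X) :
  sigma_gen G A -> sigma_gen G B -> (forall x, A x -> B x) -> mu B = 0 -> mu A = 0.
Proof.
  intros HA HB HAB HB0. apply Rle_antisym.
  - rewrite <- HB0. apply measure_le; auto.
  - apply measure_ge0; auto.
Qed.

Lemma measure_null_union (F : nat -> set X) :
  (forall k, sigma_gen G (F k)) -> (forall k, mu (F k) = 0) ->
  mu (fun x => exists k, F k x) = 0.
Proof.
  intros HF HF0.
  assert (Hd : forall k, sigma_gen G (disjointed F k)).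
  { apply (disjointed_closed F); auto.
    - apply sg_full.
    - apply sg_compl.
    - apply sigma_gen_inter. }
  rewrite union_disjointed.
  apply (uniqueness_sum (fun k => mu (disjointed F k))).
  - apply (proj2 Hmu); [exact Hd | apply disjointed_disjoint].
  - apply infinite_sum_eventually with 0%nat. intros n _.
    assert (Hz : forall k, mu (disjointed F k) = 0).
    { intros k. apply (measure_null_sub _ (F k)); auto. intros x [Hx _]; exact Hx. }
    induction n as [|n IH]; simpl; rewrite Hz; [ring|]. rewrite IH; ring.
Qed.

Lemma measure_null_union2 (A B : set X) :
  sigma_gen G A -> sigma_gen G B -> mu A = 0 -> mu B = 0 -> mu (fun x => A x \/ B x) = 0.
Proof.
  intros HA HB HA0 HB0.
  replace (fun x => A x \/ B x)
    with (fun x => exists k, (fun k => match k with 0%nat => A | _ => B end) k x).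
  - apply measure_null_union; intros [|k]; auto.
  - apply set_ext; intros x; split.
    + intros [[|k] H]; auto.
    + intros [H|H]; [exists 0%nat | exists 1%nat]; exact H.
Qed.

Lemma measure_eq_off_null (Z A B : set X) :
  sigma_gen G Z -> mu Z = 0 -> sigma_gen G A -> sigma_gen G B ->
  (forall x, ~ Z x -> (A x <-> B x)) -> mu A = mu B.
Proof.
  intros HZ HZ0 HA HB HAB.
  rewrite (measure_split A Z), (measure_split B Z) by auto.
  rewrite (measure_null_sub (fun x => A x /\ Z x) Z), (measure_null_sub (fun x => B x /\ Z x) Z);
    try apply sigma_gen_inter; try tauto.
  f_equal. f_equal. apply set_ext; intros x. specialize (HAB x). tauto.
Qed.

Lemma measure_restrict (C : set X) :
  sigma_gen G C -> is_measure G (fun B => mu (fun x => C x /\ B x)).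
Proof.
  intros HC. split.
  - intros B HB. apply measure_ge0, sigma_gen_inter; auto.
  - intros F HF HFd.
    replace (fun x => C x /\ exists k, F k x) with (fun x => exists k, (fun k x => C x /\ F k x) k x)
      by (apply set_ext; intros x; firstorder).
    apply (proj2 Hmu).
    + intros k. apply sigma_gen_inter; auto.
    + intros i j Hij x [_ Hi] [_ Hj]. exact (HFd i j Hij x Hi Hj).
Qed.

Lemma measure_scale (c : R) : 0 <= c -> is_measure G (fun B => mu B * c).
Proof.
  intros Hc. split.
  - intros B HB. apply Rmult_le_pos; auto. apply measure_ge0; auto.
  - intros F HF HFd. apply infinite_sum_scal, (proj2 Hmu); auto.
Qed.

End Measure.

Lemma measure_unique {X : Type} (G : set X -> Prop) (nu1 nu2 : set X -> R) :
  pi_system G -> is_measure G nu1 -> is_measure G nu2 ->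
  nu1 (fun _ => True) = nu2 (fun _ => True) ->
  (forall A, G A -> nu1 A = nu2 A) ->
  forall A, sigma_gen G A -> nu1 A = nu2 A.
Proof.
  intros HG H1 H2 Hfull HgenEq A HA.
  enough (sigma_gen G A /\ nu1 A = nu2 A) by tauto.
  revert A HA. apply (pi_lambda G HG (fun A => sigma_gen G A /\ nu1 A = nu2 A)).
  - intros A HA. split; [apply sg_gen|]; auto.
  - split; [apply sg_full | exact Hfull].
  - intros A [HA E]. split; [apply sg_compl; exact HA|].
    pose proof (measure_split G nu1 H1 (fun _ => True) A (sg_full G) HA) as S1.
    pose proof (measure_split G nu2 H2 (fun _ => True) A (sg_full G) HA) as S2.
    cbv beta in S1, S2.
    replace (fun x : X => True /\ A x) with A in S1, S2 by (apply set_ext; tauto).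
    replace (fun x : X => True /\ ~ A x) with (fun x => ~ A x) in S1, S2
      by (apply set_ext; tauto).
    lra.
  - intros F HF HFd. split; [apply sg_union; intros k; apply HF|].
    apply (uniqueness_sum (fun k => nu1 (F k))).
    + apply (proj2 H1); [intros k; apply HF | exact HFd].
    + replace (fun k => nu1 (F k)) with (fun k => nu2 (F k))
        by (apply functional_extensionality; intros k; symmetry; apply HF).
      apply (proj2 H2); [intros k; apply HF | exact HFd].
Qed.

(** * Cylinders *)

Notation valid_word l := (Forall (fun x : nat => (x <= l)%nat)).

Section Cylinders.

Variable l : nat.
Implicit Types (s : Seq l) (w u v : list nat) (B : set (Seq l)).

Lemma letter_le s i : (letter s i <= l)%nat.
Proof. unfold letter. destruct (s i); simpl; assumption. Qed.

Lemma letter_shiftn s k i : letter (shiftn k s) i = letter s (k + i).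
Proof. reflexivity. Qed.

Lemma shiftn_shiftn s i j : shiftn i (shiftn j s) = shiftn (j + i) s.
Proof. apply functional_extensionality; intros x. unfold shiftn. f_equal. lia. Qed.

Lemma shift_shiftn s j : shift (shiftn j s) = shiftn (S j) s.
Proof. rewrite <- Nat.add_1_r. exact (shiftn_shiftn s 1 j). Qed.

Lemma invariant_shiftn (Z : set (Seq l)) : invariant Z -> forall j s, Z (shiftn j s) <-> Z s.
Proof.
  intros HZ j; induction j as [|j IH]; intros s; [tauto|].
  change (Z (shiftn j (shift s)) <-> Z s). rewrite IH. apply HZ.
Qed.

Lemma cyl_single a s : cyl [a] s <-> letter s 0 = a.
Proof.
  unfold cyl; simpl; split.
  - intros H; apply (H 0%nat); lia.
  - intros H [|i] Hi; [exact H | lia].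
Qed.

Lemma cyl_nil s : cyl [] s.
Proof. intros i Hi; simpl in Hi; lia. Qed.

Lemma cyl_app u v s : cyl (u ++ v) s <-> cyl u s /\ cyl v (shiftn (length u) s).
Proof.
  unfold cyl; split.
  - intros H; split.
    + intros i Hi. rewrite <- (app_nth1 u v 0%nat Hi). apply H. rewrite length_app; lia.
    + intros i Hi. rewrite letter_shiftn, H by (rewrite length_app; lia).
      apply app_nth2_plus.
  - intros [Hu Hv] i Hi. rewrite length_app in Hi.
    destruct (Nat.lt_ge_cases i (length u)) as [Hlt|Hge].
    + rewrite app_nth1 by exact Hlt. apply Hu, Hlt.
    + rewrite app_nth2 by exact Hge.
      replace i with (length u + (i - length u))%nat at 1 by lia.
      rewrite <- letter_shiftn. apply Hv. lia.
Qed.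

Lemma cyl_cons_single a w s : cyl (a :: w) s -> cyl [a] s.
Proof. intros H. apply (cyl_app [a] w s), H. Qed.

Lemma cyl_valid w s : cyl w s -> valid_word l w.
Proof.
  intros Hs. apply Forall_forall. intros x Hx.
  destruct (In_nth w x 0%nat Hx) as [i [Hi <-]]. rewrite <- (Hs i Hi). apply letter_le.
Qed.

Lemma valid_word_last w b : valid_word l (w ++ [b]) -> (b <= l)%nat.
Proof. intros H. apply Forall_app in H as [_ H]. exact (Forall_inv H). Qed.

Lemma cylinder_measurable w : measurable (@cyl l w).
Proof. apply sg_gen. exists w; reflexivity. Qed.

Lemma cylinder_pi_system : pi_system (@is_cylinder l).
Proof.
  assert (Hle : forall w1 w2, (length w1 <= length w2)%nat ->
     is_cylinder (fun s => @cyl l w1 s /\ cyl w2 s)).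
  { intros w1 w2 Hlen.
    destruct (classic (forall i, (i < length w1)%nat -> nth i w1 0%nat = nth i w2 0%nat))
      as [Hpre|Hpre].
    - exists w2. apply set_ext; intros s; split; [tauto|].
      intros Hs; split; auto. intros i Hi. rewrite Hpre by exact Hi. apply Hs; lia.
    - apply not_all_ex_not in Hpre. destruct Hpre as [i Hi].
      apply imply_to_and in Hi. destruct Hi as [Hi1 Hi2].
      (* two incompatible words: the intersection is the empty cylinder [l+1] *)
      exists [S l]. apply set_ext; intros s; split.
      + intros [H1 H2]. exfalso. apply Hi2.
        rewrite <- (H1 i Hi1), <- (H2 i ltac:(lia)). reflexivity.
      + intros H. exfalso. rewrite cyl_single in H. pose proof (letter_le s 0). lia. }
  intros A B [w1 ->] [w2 ->].
  destruct (Nat.le_ge_cases (length w1) (length w2)) as [H|H]; auto.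
  replace (fun s => cyl w1 s /\ cyl w2 s) with (fun s => @cyl l w2 s /\ cyl w1 s)
    by (apply set_ext; tauto).
  auto.
Qed.

Lemma preim_succ_cyl w :
  preim 1 (@cyl l w) = (fun s => exists c, cyl (c :: w) s).
Proof.
  apply set_ext; intros s; split.
  - intros H. exists (letter s 0). apply (cyl_app [letter s 0] w s). split; [|exact H].
    apply cyl_single; reflexivity.
  - intros [c H]. exact (proj2 (proj1 (cyl_app [c] w s) H)).
Qed.

Lemma preim_measurable k B : measurable B -> measurable (preim k B).
Proof.
  assert (Hsucc : forall B, measurable B -> measurable (preim 1 B)).
  { intros B' HB'. induction HB' as [A [w ->]| |A _ IH|F _ IH].
    - rewrite preim_succ_cyl. apply (sg_union _ (fun c => cyl (c :: w))).
      intros c; apply cylinder_measurable.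
    - apply sg_full.
    - apply sg_compl; exact IH.
    - apply (sg_union _ (fun k => preim 1 (F k))); exact IH. }
  intros HB. induction k as [|k IH]; [exact HB|].
  exact (Hsucc (preim k B) IH).
Qed.

Lemma measure_preim (mu : set (Seq l) -> R) k :
  is_measure is_cylinder mu -> is_measure is_cylinder (fun B => mu (preim k B)).
Proof.
  intros Hmu. split.
  - intros B HB. apply (measure_ge0 _ _ Hmu), preim_measurable, HB.
  - intros F HF HFd. apply (proj2 Hmu (fun j => preim k (F j))).
    + intros j; apply preim_measurable, HF.
    + intros i j Hij s. apply (HFd i j Hij).
Qed.

End Cylinders.

(** * The Markov property on cylinders *)

Section MarkovCylinders.

Variables (l : nat) (q : nat -> nat -> R) (p : nat -> R) (m : set (Seq l) -> R).
Hypothesis Hm : is_measure is_cylinder m.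
Hypothesis Hweight : forall a w, valid_word l (a :: w) -> m (cyl (a :: w)) = cyl_weight p q a w.

Lemma qprod_app_cons a w b v : qprod q a (w ++ b :: v) = qprod q a (w ++ [b]) * qprod q b v.
Proof.
  revert a; induction w as [|c w IH]; intros a; simpl.
  - ring.
  - rewrite IH. ring.
Qed.

Lemma measure_cyl_single b : (b <= l)%nat -> m (cyl [b]) = p b.
Proof. intros Hb. rewrite Hweight by (repeat constructor; exact Hb). unfold cyl_weight; simpl; ring. Qed.

Lemma cyl_snoc_shiftn_cons w b v (s : Seq l) :
  cyl (w ++ [b]) s /\ cyl (b :: v) (shiftn (length w) s) <-> cyl (w ++ b :: v) s.
Proof.
  rewrite !cyl_app. pose proof (cyl_cons_single l b v (shiftn (length w) s)). tauto.
Qed.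

Lemma measure_cyl_concat w b v : valid_word l (w ++ [b]) -> valid_word l v ->
  m (cyl (w ++ b :: v)) * p b = m (cyl (b :: v)) * m (cyl (w ++ [b])).
Proof.
  intros Hwb Hv. pose proof (valid_word_last l w b Hwb) as Hb.
  destruct w as [|a w]; simpl.
  - rewrite measure_cyl_single by exact Hb. ring.
  - inversion Hwb as [|? ? Ha Hwb']; subst.
    rewrite !Hweight; [unfold cyl_weight; rewrite qprod_app_cons; ring | ..].
    all: try exact Hwb; try (constructor; assumption).
    constructor; [exact Ha|]. apply Forall_app in Hwb' as [Hw _].
    apply Forall_app; split; [exact Hw | constructor; assumption].
Qed.

Lemma markov_cyl_cyl w b w' : valid_word l (w ++ [b]) ->
  m (fun s => cyl (w ++ [b]) s /\ cyl w' (shiftn (length w) s)) * p b =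
  m (fun s => cyl [b] s /\ cyl w' s) * m (cyl (w ++ [b])).
Proof.
  intros Hwb. pose proof (valid_word_last l w b Hwb) as Hb.
  destruct w' as [|c v].
  - replace (fun s => cyl (w ++ [b]) s /\ cyl [] (shiftn (length w) s)) with (@cyl l (w ++ [b]))
      by (apply set_ext; intros s; pose proof (cyl_nil l (shiftn (length w) s)); tauto).
    replace (fun s => cyl [b] s /\ cyl [] s) with (@cyl l [b])
      by (apply set_ext; intros s; pose proof (cyl_nil l s); tauto).
    rewrite measure_cyl_single by exact Hb. ring.
  - destruct (Nat.eq_dec c b) as [->|Hcb].
    + rewrite (set_ext _ _ (cyl_snoc_shiftn_cons w b v)).
      replace (fun s => cyl [b] s /\ cyl (b :: v) s) with (@cyl l (b :: v))
        by (apply set_ext; intros s; pose proof (cyl_cons_single l b v s); tauto).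
      destruct (classic (valid_word l v)) as [Hv|Hv]; [apply measure_cyl_concat; assumption|].
      rewrite (measure_eq0_of_empty _ m Hm (cyl (w ++ b :: v))),
        (measure_eq0_of_empty _ m Hm (cyl (b :: v))); [ring | |]; intros s Hs; apply Hv;
        apply cyl_valid in Hs; try (apply Forall_app in Hs as [_ Hs]); exact (Forall_inv_tail Hs).
    + assert (Hc : forall s : Seq l, cyl (c :: v) s -> letter s 0 = c)
        by (intros s Hs; apply cyl_single, (cyl_cons_single _ _ _ _ Hs)).
      assert (E1 : forall s : Seq l, ~ (cyl (w ++ [b]) s /\ cyl (c :: v) (shiftn (length w) s))).
      { intros s [H1 H2]. apply Hc in H2.
        rewrite cyl_app, cyl_single in H1. destruct H1 as [_ H1]. congruence. }
      assert (E2 : forall s : Seq l, ~ (cyl [b] s /\ cyl (c :: v) s)).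
      { intros s [H1 H2]. apply Hc in H2. rewrite cyl_single in H1. congruence. }
      rewrite (measure_eq0_of_empty _ m Hm _ E1), (measure_eq0_of_empty _ m Hm _ E2). ring.
Qed.

(* Given a word ending in [b], the future is distributed as [m] restricted to [C_b]. *)
Lemma markov_cyl_preim w b (B : set (Seq l)) :
  valid_word l (w ++ [b]) -> measurable B ->
  m (fun s => cyl (w ++ [b]) s /\ B (shiftn (length w) s)) * p b =
  m (fun s => cyl [b] s /\ B s) * m (cyl (w ++ [b])).
Proof.
  intros Hwb HB.
  pose proof (valid_word_last l w b Hwb) as Hb.
  assert (Hpb : 0 <= p b)
    by (rewrite <- measure_cyl_single by exact Hb; apply (measure_ge0 _ _ Hm), cylinder_measurable).
  assert (HC : 0 <= m (cyl (w ++ [b]))) by (apply (measure_ge0 _ _ Hm), cylinder_measurable).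
  revert B HB.
  apply (measure_unique is_cylinder
           (fun B => m (fun s => cyl (w ++ [b]) s /\ B (shiftn (length w) s)) * p b)
           (fun B => m (fun s => cyl [b] s /\ B s) * m (cyl (w ++ [b])))).
  - apply cylinder_pi_system.
  - exact (measure_scale _ _ (measure_preim l _ (length w)
             (measure_restrict _ _ Hm _ (cylinder_measurable l _))) _ Hpb).
  - exact (measure_scale _ _ (measure_restrict _ _ Hm _ (cylinder_measurable l _)) _ HC).
  - replace (fun s => cyl (w ++ [b]) s /\ True) with (@cyl l (w ++ [b]))
      by (apply set_ext; tauto).
    replace (fun s => cyl [b] s /\ True) with (@cyl l [b]) by (apply set_ext; tauto).
    rewrite measure_cyl_single by exact Hb. ring.
  - intros A [w' ->]. apply markov_cyl_cyl, Hwb.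
Qed.

Lemma markov_cyl_preim_null w b (B : set (Seq l)) :
  valid_word l (w ++ [b]) -> 0 < p b -> measurable B -> m B = 0 ->
  m (fun s => cyl (w ++ [b]) s /\ B (shiftn (length w) s)) = 0.
Proof.
  intros Hwb Hpb HB HB0. pose proof (markov_cyl_preim w b B Hwb HB) as Hprod.
  rewrite (measure_null_sub _ _ Hm (fun s => cyl [b] s /\ B s) B) in Hprod;
    [| apply sigma_gen_inter; [apply cylinder_measurable | exact HB] | exact HB | tauto | exact HB0].
  rewrite Rmult_0_l in Hprod. apply Rmult_integral in Hprod as [H|H]; [exact H | lra].
Qed.

End MarkovCylinders.

(** * Generating partitions *)

Section Approximation.

Context {X : Type}.
Variables (G H : set X -> Prop) (mu : set X -> R).
Hypothesis Hmu : is_measure G mu.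
Hypothesis HHG : forall A, H A -> sigma_gen G A.

Definition approximable (B : set X) : Prop :=
  exists A, sigma_gen H A /\ mu (symdiff A B) = 0.

Lemma sigma_gen_mono (A : set X) : sigma_gen H A -> sigma_gen G A.
Proof.
  intros HA. induction HA as [A HA| |A _ IH|F _ IH].
  - apply HHG, HA.
  - apply sg_full.
  - apply sg_compl, IH.
  - apply sg_union, IH.
Qed.

Lemma approximable_ae (Z A B : set X) :
  sigma_gen H A -> sigma_gen G B -> sigma_gen G Z -> mu Z = 0 ->
  (forall x, ~ Z x -> (A x <-> B x)) -> approximable B.
Proof.
  intros HA HB HZ HZ0 HAB. exists A. split; [exact HA|].
  apply (measure_null_sub G mu Hmu _ Z); auto.
  - apply sigma_gen_symdiff; [apply sigma_gen_mono|]; assumption.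
  - intros x Hx. apply NNPP. intros HZx. exact (Hx (HAB x HZx)).
Qed.

Lemma approximable_full : approximable (fun _ => True).
Proof.
  exists (fun _ => True). split; [apply sg_full|].
  apply (measure_eq0_of_empty G mu Hmu). intros x Hx. apply Hx. tauto.
Qed.

Lemma approximable_compl (B : set X) : approximable B -> approximable (fun x => ~ B x).
Proof.
  intros [A [HA HA0]]. exists (fun x => ~ A x). split; [apply sg_compl, HA|].
  rewrite <- HA0. f_equal. apply set_ext; intros x; unfold symdiff; tauto.
Qed.

Lemma approximable_inter (B1 B2 : set X) :
  sigma_gen G B1 -> sigma_gen G B2 -> approximable B1 -> approximable B2 ->
  approximable (fun x => B1 x /\ B2 x).
Proof.
  intros HB1 HB2 [A1 [HA1 HA10]] [A2 [HA2 HA20]].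
  exists (fun x => A1 x /\ A2 x). split; [apply sigma_gen_inter; assumption|].
  assert (HM1 : sigma_gen G (symdiff A1 B1)) by (apply sigma_gen_symdiff; auto; apply sigma_gen_mono, HA1).
  assert (HM2 : sigma_gen G (symdiff A2 B2)) by (apply sigma_gen_symdiff; auto; apply sigma_gen_mono, HA2).
  apply (measure_null_sub G mu Hmu _ (fun x => symdiff A1 B1 x \/ symdiff A2 B2 x)).
  - apply sigma_gen_symdiff; apply sigma_gen_inter; auto; apply sigma_gen_mono; assumption.
  - apply sigma_gen_union2; assumption.
  - intros x. unfold symdiff. tauto.
  - apply (measure_null_union2 G mu Hmu); assumption.
Qed.

Lemma approximable_union (F : nat -> set X) :
  (forall k, sigma_gen G (F k)) -> (forall k, approximable (F k)) ->
  approximable (fun x => exists k, F k x).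
Proof.
  intros HF HFa. destruct (choice _ HFa) as [A HA].
  assert (HM : forall k, sigma_gen G (symdiff (A k) (F k)))
    by (intros k; apply sigma_gen_symdiff; [apply sigma_gen_mono, HA | apply HF]).
  exists (fun x => exists k, A k x). split; [apply sg_union; intros k; apply HA|].
  apply (measure_null_sub G mu Hmu _ (fun x => exists k, symdiff (A k) (F k) x)).
  - apply sigma_gen_symdiff; apply sg_union; [intros k; apply sigma_gen_mono, HA | exact HF].
  - apply sg_union, HM.
  - intros x Hx. apply NNPP. intros Hnone. apply Hx.
    assert (E : forall k, A k x <-> F k x) by (intros k; apply NNPP; intros Hk; eauto).
    firstorder.
  - apply (measure_null_union G mu Hmu); [exact HM | intros k; apply HA].
Qed.

Theorem approximable_sigma_gen :
  (forall B, G B -> approximable B) -> forall B, sigma_gen G B -> approximable B.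
Proof.
  intros HG B HB. induction HB as [B HB| |B _ IH|F HF IH].
  - apply HG, HB.
  - apply approximable_full.
  - apply approximable_compl, IH.
  - apply approximable_union; assumption.
Qed.

End Approximation.

Section NullInvariantPart.

Variables (l : nat) (m : set (Seq l) -> R) (F : nat -> set (Seq l)).
Hypothesis Hm : is_measure is_cylinder m.
Hypothesis HF : forall k, measurable (F k).

Definition null_invariant_part : set (Seq l) :=
  fun s => exists k, (invariant (F k) /\ m (F k) = 0) /\ F k s.

Lemma null_invariant_part_measurable : measurable null_invariant_part.
Proof. apply sigma_gen_union_if. intros k _. apply HF. Qed.

Lemma null_invariant_part_null : m null_invariant_part = 0.
Proof.
  apply (measure_null_union _ _ Hm); intros k;
    destruct (classic (invariant (F k) /\ m (F k) = 0)) as [Hk|Hk].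
  - apply sigma_gen_ext with (F k); [apply HF | tauto].
  - apply sigma_gen_ext with (fun _ => False); [apply sigma_gen_empty | tauto].
  - rewrite <- (proj2 Hk). f_equal. apply set_ext; tauto.
  - apply (measure_eq0_of_empty _ _ Hm). tauto.
Qed.

Lemma null_invariant_part_invariant : invariant null_invariant_part.
Proof.
  intros s. unfold null_invariant_part.
  split; intros [k [[Hinv H0] Hk]]; exists k; repeat split; auto; apply Hinv; exact Hk.
Qed.

End NullInvariantPart.

Definition shifted_partition_sets {l : nat} (N : nat) (P : nat -> set (Seq l)) :
    set (Seq l) -> Prop :=
  fun C => exists k i, (i <= N)%nat /\ C = preim k (P i).

Lemma shifted_partition_sets_measurable {l : nat} N (P : nat -> set (Seq l)) :
  is_partition N P -> forall A, shifted_partition_sets N P A -> measurable A.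
Proof. intros HP A [k [i [Hi ->]]]. apply preim_measurable, (proj1 HP), Hi. Qed.

Lemma Ptilde_le {l : nat} N (P : nat -> set (Seq l)) O k s :
  (k <= N)%nat -> Ptilde N P O k s <-> P k s /\ ~ O s.
Proof. intros Hk. unfold Ptilde. rewrite (proj2 (Nat.leb_le k N) Hk). tauto. Qed.

Lemma Ptilde_last {l : nat} N (P : nat -> set (Seq l)) O : Ptilde N P O (S N) = O.
Proof.
  apply set_ext; intros s. unfold Ptilde.
  rewrite (proj2 (Nat.leb_gt (S N) N) (Nat.lt_succ_diag_r N)). tauto.
Qed.

Lemma Ptilde_measurable {l : nat} N (P : nat -> set (Seq l)) O :
  is_partition N P -> measurable O -> forall k, measurable (Ptilde N P O k).
Proof.
  intros [HP _] HO k. unfold Ptilde. destruct (Nat.leb k N) eqn:Hk.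
  - apply sigma_gen_inter; [apply HP, Nat.leb_le, Hk | apply sg_compl, HO].
  - exact HO.
Qed.

Lemma preim_cyl_cons {l : nat} j a w :
  preim j (@cyl l (a :: w)) = (fun s => preim j (cyl [a]) s /\ preim (S j) (cyl w) s).
Proof.
  apply set_ext; intros s. unfold preim.
  rewrite (cyl_app l [a] w), shiftn_shiftn, Nat.add_1_r. reflexivity.
Qed.

Section Generating.

Variables (l : nat) (m : set (Seq l) -> R) (N : nat) (P : nat -> set (Seq l)) (O : set (Seq l)).
Hypothesis Hm : is_measure is_cylinder m.
Hypothesis HP : is_partition N P.
Hypothesis HO : measurable O.
Hypothesis HO0 : m O = 0.
Hypothesis HOinv : invariant O.
Hypothesis Hletter : forall k, (k <= S N)%nat ->
  (exists a, (a <= l)%nat /\ forall s, Ptilde N P O k s -> cyl [a] s) \/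
  (invariant (Ptilde N P O k) /\ m (Ptilde N P O k) = 0).

Let Q := Ptilde N P O.
Let Z := null_invariant_part l m Q.

Lemma letter0_off_null_part (s : Seq l) a : ~ Z s ->
  letter s 0 = a <-> exists k, ((k <= N)%nat /\ forall t, Q k t -> cyl [a] t) /\ P k s.
Proof.
  intros HZs.
  assert (HOs : ~ O s).
  { intros Hs. apply HZs. exists (S N). unfold Q. rewrite Ptilde_last. tauto. }
  destruct (proj2 (proj2 HP) s) as [k [Hk HPk]].
  assert (HQk : Q k s) by (apply Ptilde_le; auto).
  destruct (Hletter k ltac:(lia)) as [[b [_ Hb]]|Hnull].
  2:{ exfalso. apply HZs. exists k. tauto. }
  assert (Hsb : letter s 0 = b) by (apply cyl_single, Hb, HQk).
  split.
  - intros Hsa. exists k. repeat split; auto. intros t Ht. rewrite cyl_single, <- Hsa, Hsb.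
    apply cyl_single, Hb, Ht.
  - intros [k' [[Hk' Ha] HPk']].
    destruct (Nat.eq_dec k k') as [<-|Hne].
    + apply cyl_single, Ha, HQk.
    + exfalso. exact (proj1 (proj2 HP) k k' Hk Hk' Hne s HPk HPk').
Qed.

Lemma preim_cyl_single_approximable j a :
  approximable (shifted_partition_sets N P) m (preim j (cyl [a])).
Proof.
  assert (HQ : forall k, measurable (Q k)) by (apply Ptilde_measurable; auto).
  apply (approximable_ae is_cylinder _ m Hm (shifted_partition_sets_measurable N P HP))
    with (Z := Z) (A := fun s => exists k, ((k <= N)%nat /\ forall t, Q k t -> cyl [a] t) /\
                                           P k (shiftn j s)).
  - apply sigma_gen_union_if. intros k [Hk _]. apply sg_gen. exists j, k. auto.
  - apply preim_measurable, cylinder_measurable.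
  - apply null_invariant_part_measurable, HQ.
  - apply null_invariant_part_null; assumption.
  - intros s HZs. unfold preim. rewrite cyl_single, letter0_off_null_part; [reflexivity|].
    rewrite (invariant_shiftn l Z (null_invariant_part_invariant l m Q) j s). exact HZs.
Qed.

Theorem generating_of_letter_blocks : generating m N P.
Proof.
  pose proof (shifted_partition_sets_measurable N P HP) as Hgen.
  assert (Hcyl : forall w j, approximable (shifted_partition_sets N P) m (preim j (@cyl l w))).
  { intros w; induction w as [|a w IH]; intros j.
    - replace (preim j (@cyl l [])) with (fun _ : Seq l => True)
        by (apply set_ext; intros s; pose proof (cyl_nil l (shiftn j s)); tauto).
      apply (approximable_full is_cylinder _ m Hm).
    - rewrite preim_cyl_cons.
      apply (approximable_inter is_cylinder _ m Hm Hgen);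
        try (apply preim_measurable, cylinder_measurable).
      + apply preim_cyl_single_approximable.
      + apply IH. }
  intros B HB. apply (approximable_sigma_gen is_cylinder _ m Hm Hgen); [|exact HB].
  intros A [w ->]. exact (Hcyl w 0%nat).
Qed.

End Generating.

(** * Markov partitions *)

Definition word (a : nat -> nat) (t : nat) : list nat := map a (seq 0 t).

Lemma length_word a t : length (word a t) = t.
Proof. unfold word. rewrite length_map, length_seq. reflexivity. Qed.

Lemma word_S a t : word a (S t) = word a t ++ [a t].
Proof. unfold word. rewrite seq_S, map_app. reflexivity. Qed.

Lemma nth_word a t i : (i < t)%nat -> nth i (word a t) 0%nat = a i.
Proof.
  intros Hi. unfold word.
  rewrite nth_indep with (d' := a 0%nat) by (rewrite length_map, length_seq; exact Hi).
  rewrite map_nth, seq_nth by exact Hi. reflexivity.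
Qed.

Lemma cyl_word {l : nat} a t (s : Seq l) :
  cyl (word a t) s <-> forall i, (i < t)%nat -> letter s i = a i.
Proof.
  unfold cyl. rewrite length_word.
  split; intros H i Hi; [rewrite <- (nth_word a t i Hi) | rewrite (nth_word a t i Hi)]; auto.
Qed.

Lemma valid_word_word l a t :
  (forall i, (i < t)%nat -> (a i <= l)%nat) -> valid_word l (word a t).
Proof.
  intros Ha. apply Forall_forall. intros x Hx. unfold word in Hx.
  apply in_map_iff in Hx as [i [<- Hi]]. apply in_seq in Hi. apply Ha. lia.
Qed.

Lemma pcyl_measurable {l : nat} (M : nat -> set (Seq l)) idx t :
  (forall j, (j < t)%nat -> measurable (M (idx j))) -> measurable (pcyl M idx t).
Proof.
  induction t as [|t IH]; intros HM.
  - apply sigma_gen_ext with (fun _ => True); [apply sg_full|].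
    intros s; split; [intros _ j Hj; lia | auto].
  - apply sigma_gen_ext with (fun s => pcyl M idx t s /\ preim t (M (idx t)) s).
    + apply sigma_gen_inter; [apply IH; auto | apply preim_measurable, HM; lia].
    + intros s; unfold pcyl, preim; split.
      * intros [H1 H2] j Hj. destruct (Nat.eq_dec j t) as [->|]; [exact H2 | apply H1; lia].
      * intros H; split; [intros j Hj | ]; apply H; lia.
Qed.

Lemma ratio_eq_of_cross (A B x y c w : R) :
  A * c = x * w -> B * c = y * w -> 0 < B -> 0 < c -> A / B = x / y.
Proof.
  intros HA HB HB0 Hc.
  assert (Hy : y <> 0) by (intros ->; nra).
  assert (Hw : w <> 0) by (intros ->; nra).
  field_simplify_eq; [|split; lra].
  apply (Rmult_eq_reg_r (c * w)); [|intros H; apply Rmult_integral in H; lra].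
  transitivity ((A * c) * (y * w)); [ring|]. rewrite HA, <- HB. ring.
Qed.

Section MarkovPartition.

Variables (l : nat) (q : nat -> nat -> R) (p : nat -> R) (m : set (Seq l) -> R).
Variables (K : nat) (M : nat -> set (Seq l)).
Hypothesis Hm : is_measure is_cylinder m.
Hypothesis Hweight : forall a w, valid_word l (a :: w) -> m (cyl (a :: w)) = cyl_weight p q a w.
Hypothesis Hp : forall a, (a <= l)%nat -> 0 < p a.
Hypothesis HM : forall k, measurable (M k).
Hypothesis Hletter : forall k, (k <= K)%nat ->
  (exists a, (a <= l)%nat /\ forall s, M k s -> cyl [a] s) \/
  (invariant (M k) /\ m (M k) = 0).
Hypothesis Htransition : forall k1 k2, (k1 <= K)%nat -> (k2 <= K)%nat ->
  (exists a, (a <= l)%nat /\ forall s,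
     (M k1 s /\ M k2 (shift s)) <-> (cyl [a] s /\ M k2 (shift s))) \/
  m (fun s => M k1 s /\ M k2 (shift s)) = 0.

Definition transition_set (k1 k2 : nat) : set (Seq l) := fun s => M k1 s /\ M k2 (shift s).

Lemma transition_set_measurable k1 k2 : measurable (transition_set k1 k2).
Proof. apply sigma_gen_inter; [apply HM | apply (preim_measurable l 1), HM]. Qed.

Section Word.

Variables (n : nat) (idx : nat -> nat).
Hypothesis Hidx : forall j, (j <= S n)%nat -> (idx j <= K)%nat.
Hypothesis Hpos : 0 < m (pcyl M idx (S n)).

Lemma pcyl_not_in_null (Y : set (Seq l)) :
  measurable Y -> (forall s, pcyl M idx (S n) s -> Y s) -> m Y <> 0.
Proof.
  intros HY Hsub HY0.
  assert (m (pcyl M idx (S n)) <= m Y)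
    by (apply (measure_le _ _ Hm); auto; apply pcyl_measurable; auto).
  lra.
Qed.

Lemma block_letter j : (j <= n)%nat ->
  exists a, (a <= l)%nat /\ forall s, M (idx j) s -> letter s 0 = a.
Proof.
  intros Hj. destruct (Hletter (idx j) (Hidx j ltac:(lia))) as [[a [Ha Hsub]]|[Hinv Hnull]].
  - exists a. split; [exact Ha|]. intros s Hs. apply cyl_single, Hsub, Hs.
  - exfalso. apply (pcyl_not_in_null (M (idx j))); auto.
    intros s Hs. apply (invariant_shiftn l _ Hinv j), Hs. lia.
Qed.

Variable a : nat -> nat.
Hypothesis Ha_le : forall j, (j <= n)%nat -> (a j <= l)%nat.
Hypothesis Ha : forall j, (j <= n)%nat -> forall s, M (idx j) s -> letter s 0 = a j.

Lemma pcyl_cyl_word t s : (t <= S n)%nat -> pcyl M idx t s -> cyl (word a t) s.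
Proof.
  intros Ht Hs. apply cyl_word. intros i Hi.
  rewrite <- (Nat.add_0_r i) at 1. change (letter (shiftn i s) 0 = a i).
  apply (Ha i), Hs; lia.
Qed.

Lemma transition_not_null j : (j < n)%nat -> m (transition_set (idx j) (idx (S j))) <> 0.
Proof.
  intros Hj Hnull.
  apply (pcyl_not_in_null
           (fun s => cyl (word a j ++ [a j]) s /\ transition_set (idx j) (idx (S j)) (shiftn (length (word a j)) s))).
  - apply sigma_gen_inter; [apply cylinder_measurable|].
    exact (preim_measurable l _ _ (transition_set_measurable _ _)).
  - intros s Hs. rewrite <- word_S, length_word. split.
    + apply (pcyl_cyl_word (S j)); [lia | intros i Hi; apply Hs; lia].
    + split; [apply Hs; lia | rewrite shift_shiftn; apply Hs; lia].
  - apply (markov_cyl_preim_null l q p m Hm Hweight); auto.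
    + rewrite <- word_S. apply valid_word_word. intros i Hi; apply Ha_le; lia.
    + apply Hp, Ha_le. lia.
    + apply transition_set_measurable.
Qed.

Lemma transition_backward j s : (j < n)%nat ->
  letter s 0 = a j -> M (idx (S j)) (shift s) -> M (idx j) s.
Proof.
  intros Hj Hs0 Hs1.
  destruct (Htransition (idx j) (idx (S j)) (Hidx j ltac:(lia)) (Hidx (S j) ltac:(lia)))
    as [[b [_ Hb]]|Hnull]; [|exfalso; exact (transition_not_null j Hj Hnull)].
  destruct (Nat.eq_dec b (a j)) as [->|Hne].
  - apply (Hb s). rewrite cyl_single. auto.
  - (* a transition set lying both in C_b and in C_{a j} would be empty *)
    exfalso. apply (transition_not_null j Hj), (measure_eq0_of_empty _ _ Hm).
    intros t Ht. apply Hne.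
    rewrite <- (Ha j ltac:(lia) t (proj1 Ht)). symmetry. apply cyl_single, (Hb t), Ht.
Qed.

Lemma blocks_backward s : cyl (word a (S n)) s -> M (idx n) (shiftn n s) ->
  forall j, (j <= n)%nat -> M (idx j) (shiftn j s).
Proof.
  intros Hw Hn j Hj. rewrite cyl_word in Hw.
  remember (n - j)%nat as d eqn:Hd. revert j Hj Hd.
  induction d as [|d IH]; intros j Hj Hd.
  - replace j with n by lia. exact Hn.
  - apply transition_backward; [lia | |].
    + rewrite letter_shiftn, Nat.add_0_r. apply Hw. lia.
    + rewrite shift_shiftn. apply IH; lia.
Qed.

Lemma pcyl_eq_word :
  pcyl M idx (S n) = (fun s => cyl (word a (S n)) s /\ M (idx n) (shiftn n s)).
Proof.
  apply set_ext; intros s; split.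
  - intros Hs. split; [apply (pcyl_cyl_word (S n)); auto | apply Hs; lia].
  - intros [Hw Hn] j Hj. apply blocks_backward; auto. lia.
Qed.

Lemma pcyl_succ_eq_word :
  pcyl M idx (S (S n)) =
  (fun s => cyl (word a (S n)) s /\ transition_set (idx n) (idx (S n)) (shiftn n s)).
Proof.
  apply set_ext; intros s; split.
  - intros Hs. split.
    + apply cyl_word. intros i Hi. rewrite <- (Nat.add_0_r i) at 1. change (letter (shiftn i s) 0 = a i).
  apply (Ha i), Hs; lia.
    + split; [apply Hs; lia | rewrite shift_shiftn; apply Hs; lia].
  - intros [Hw [Hn Hn1]] j Hj. destruct (Nat.eq_dec j (S n)) as [->|Hne].
    + rewrite <- shift_shiftn. exact Hn1.
    + apply blocks_backward; auto. lia.
Qed.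

End Word.

Theorem markov_property_of_letter_blocks : markov_property m K M.
Proof.
  intros n idx Hn Hidx Hpos. destruct n as [|n]; [lia|].
  replace (S n - 1)%nat with n by lia.
  destruct (choice (fun j b => (j <= n)%nat -> (b <= l)%nat /\
                      forall s, M (idx j) s -> letter s 0 = b)) as [a Ha].
  { intros j. destruct (le_lt_dec j n) as [Hj|Hj].
    - destruct (block_letter n idx Hidx Hpos j Hj) as [b Hb]. exists b. auto.
    - exists 0%nat. lia. }
  assert (Hvalid : valid_word l (word a n ++ [a n])).
  { rewrite <- word_S. apply valid_word_word. intros i Hi. apply Ha. lia. }
  assert (Hin : forall B, (forall s, B s -> M (idx n) s) -> (fun s => cyl [a n] s /\ B s) = B).
  { intros B HB. apply set_ext; intros s; split; [tauto|]. intros Hs. split; [|exact Hs].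
    apply cyl_single, (Ha n); auto. }
  pose proof (markov_cyl_preim l q p m Hm Hweight _ _ _ Hvalid (HM (idx n))) as Hblock.
  pose proof (markov_cyl_preim l q p m Hm Hweight _ _ _ Hvalid
                (transition_set_measurable (idx n) (idx (S n)))) as Htrans.
  rewrite <- word_S, length_word in Hblock, Htrans.
  rewrite Hin in Hblock, Htrans by (unfold transition_set; tauto).
  rewrite <- (pcyl_eq_word n idx Hidx Hpos a (fun j Hj => proj1 (Ha j Hj)) (fun j Hj => proj2 (Ha j Hj)))
    in Hblock.
  rewrite <- (pcyl_succ_eq_word n idx Hidx Hpos a (fun j Hj => proj1 (Ha j Hj))
               (fun j Hj => proj2 (Ha j Hj))) in Htrans.
  apply (ratio_eq_of_cross _ _ _ _ _ _ Htrans Hblock Hpos), Hp, Ha. lia.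
Qed.

End MarkovPartition.

Lemma markov_property_of_Ptilde (l : nat) (m : set (Seq l) -> R) N (P : nat -> set (Seq l)) O :
  is_measure is_cylinder m -> is_partition N P ->
  measurable O -> m O = 0 -> invariant O ->
  markov_property m (S N) (Ptilde N P O) -> markov_property m N P.
Proof.
  intros Hm HP HO HO0 HOinv HQ n idx Hn Hidx Hpos.
  set (Q := Ptilde N P O) in *.
  assert (HQm : forall k, measurable (Q k)) by (apply Ptilde_measurable; auto).
  assert (HPm : forall j, (j <= n)%nat -> measurable (P (idx j)))
    by (intros j Hj; apply (proj1 HP), Hidx, Hj).
  assert (Hoff : forall j s, (j <= n)%nat -> ~ O s -> (Q (idx j) s <-> P (idx j) s)).
  { intros j s Hj Hs. unfold Q. rewrite Ptilde_le by (apply Hidx, Hj). tauto. }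
  assert (Hpcyl : forall t, (t <= S n)%nat -> m (pcyl P idx t) = m (pcyl Q idx t)).
  { intros t Ht. apply (measure_eq_off_null _ _ Hm O); auto;
      [apply pcyl_measurable; intros j Hj; apply HPm; lia | apply pcyl_measurable; auto |].
    intros s Hs. unfold pcyl.
    split; intros H j Hj; apply (Hoff j); try lia; try apply H, Hj;
      rewrite (invariant_shiftn l O HOinv); exact Hs. }
  assert (Htrans : m (fun s => P (idx (n - 1)%nat) s /\ P (idx n) (shift s)) =
                   m (fun s => Q (idx (n - 1)%nat) s /\ Q (idx n) (shift s))).
  { apply (measure_eq_off_null _ _ Hm O); auto.
    - apply sigma_gen_inter; [apply HPm; lia | exact (preim_measurable l 1 _ (HPm n (le_n n)))].
    - apply sigma_gen_inter; [apply HQm | exact (preim_measurable l 1 _ (HQm _))].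
    - intros s Hs. assert (Hs1 : ~ O (shift s)) by (rewrite (HOinv s); exact Hs).
      rewrite (Hoff (n - 1)%nat s), (Hoff n (shift s)) by (lia || assumption). reflexivity. }
  assert (Hblock : m (P (idx (n - 1)%nat)) = m (Q (idx (n - 1)%nat))).
  { apply (measure_eq_off_null _ _ Hm O); [exact HO | exact HO0 | apply HPm; lia | apply HQm |].
    intros s Hs. symmetry. apply Hoff; [lia | exact Hs]. }
  rewrite !Hpcyl, Htrans, Hblock by lia. rewrite Hpcyl in Hpos by lia.
  apply HQ; [exact Hn | intros j Hj; apply le_S, Hidx, Hj | exact Hpos].
Qed.

Theorem corollary3 (l : nat) (q : nat -> nat -> R) (p : nat -> R)
    (m : set (Seq l) -> R) (N : nat) (P : nat -> set (Seq l)) (O : set (Seq l)) :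
  stochastic l q ->
  stationary_pos l q p ->
  markov_measure l q p m ->
  is_partition N P ->
  measurable O -> m O = 0 -> invariant O ->
  (* (i) *)
  (forall k, (k <= S N)%nat ->
     (exists a, (a <= l)%nat /\ forall s, Ptilde N P O k s -> cyl [a] s) \/
     (invariant (Ptilde N P O k) /\ m (Ptilde N P O k) = 0)) ->
  (* (ii) *)
  (forall k1 k2, (k1 <= S N)%nat -> (k2 <= S N)%nat ->
     (exists a, (a <= l)%nat /\ forall s,
        (Ptilde N P O k1 s /\ Ptilde N P O k2 (shift s)) <->
        (cyl [a] s /\ Ptilde N P O k2 (shift s))) \/
     m (fun s => Ptilde N P O k1 s /\ Ptilde N P O k2 (shift s)) = 0) ->
  generating m N P /\ markov_property m N P.
Proof.
  intros _ [Hp _] [Hm_ge0 [Hm_add Hweight]] HP HO HO0 HOinv Hletter Htransition.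
  assert (Hm : is_measure is_cylinder m) by (split; assumption).
  split.
  - exact (generating_of_letter_blocks l m N P O Hm HP HO HO0 HOinv Hletter).
  - apply (markov_property_of_Ptilde l m N P O Hm HP HO HO0 HOinv).
    exact (markov_property_of_letter_blocks l q p m (S N) (Ptilde N P O) Hm Hweight Hp
             (Ptilde_measurable N P O HP HO) Hletter Htransition).
Qed.
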